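(* Let $(V_i,W_{i\oplus_5 1})$, $i\in\{1,\ldots,5\}$, be a consistently connected KCBS-system satisfying the KCBS exclusion, and let $p_i=\Pr[V_i=1]=\Pr[W_i=1]$. Then $$\mathsf{s}_{odd}\big(\langle V_iW_{i\oplus_5 1}\rangle:i\in\{1,\ldots,5\}\big)\le 3$$ holds if and only if $\sum_{i=1}^5 p_i\le 2$.
   Context: $\oplus_5$ denotes cyclic addition on $\{1,\ldots,5\}$ ($5\oplus_5 1=1$). A KCBS-system consists of five jointly distributed pairs $(V_i,W_{i\oplus_5 1})$, $i=1,\ldots,5$, of $\pm1$-valued random variables, variables in different pairs being stochastically unrelated. It is consistently connected if $V_i$ and $W_i$ have the same distribution for each $i$. It satisfies the KCBS exclusion if $\Pr[V_i=1,W_{i\oplus_5 1}=1]=0$ for each $i$. $\langle\cdot\rangle$ denotes expectation. For reals $a_1,\ldots,a_m$, $\mathsf{s}_{odd}(a_1,\ldots,a_m)$ is the maximum of $\sum_{i=1}^m(\pm a_i)$ over all sign choices with an odd number of minus signs. *)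

From mathcomp Require Import all_boot all_order all_algebra.
From mathcomp Require Import reals.
Set Implicit Arguments. Unset Strict Implicit. Unset Printing Implicit Defensive.
Import Order.TTheory GRing.Theory Num.Theory.
Local Open Scope ring_scope.

(* Conventions: a +-1-valued random variable's value is encoded by a boolean,
   [true] <-> +1, [false] <-> -1.  [pm b] is the numeric value. *)
Definition pm {R : ringType} (b : bool) : R := if b then 1 else -1.

(* A joint distribution of a pair (V, W) of +-1 random variables:
   [P a b] = Pr[V = pm a, W = pm b]. *)
Definition is_pair_dist {R : realType} (P : bool -> bool -> R) : Prop :=
  (forall a b, 0 <= P a b) /\ \sum_(a : bool) \sum_(b : bool) P a b = 1.

Definition prV {R : realType} (P : bool -> bool -> R) (x : bool) : R :=
  \sum_(b : bool) P x b.
Definition prW {R : realType} (P : bool -> bool -> R) (y : bool) : R :=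
  \sum_(a : bool) P a y.

Definition corr {R : realType} (P : bool -> bool -> R) : R :=
  \sum_(a : bool) \sum_(b : bool) pm a * pm b * P a b.

(* Cyclic successor on the index set 'I_5 = {0,..,4} (standing for {1,..,5}):
   ordS i has value (i+1) mod 5. *)
Definition succ5 (i : 'I_5) : 'I_5 := ordS i.

(* A KCBS-system: for each i, the joint distribution P i of the pair
   (V_i, W_{i (+)_5 1}); distinct pairs are stochastically unrelated, so the
   system is exactly this family of five joint distributions. *)
Definition KCBS_system {R : realType} (P : 'I_5 -> bool -> bool -> R) : Prop :=
  forall i, is_pair_dist (P i).

(* Consistent connectedness: V_i (in pair i) and W_i (in the pair whose
   second component is W_i, i.e. pair j with succ5 j = i) have the same
   distribution. *)
Definition consistently_connected {R : realType}
  (P : 'I_5 -> bool -> bool -> R) : Prop :=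
  forall j : 'I_5, forall x : bool, prV (P (succ5 j)) x = prW (P j) x.

Definition KCBS_exclusion {R : realType} (P : 'I_5 -> bool -> bool -> R) : Prop :=
  forall i, P i true true = 0.

(* Sum of the a_i with signs given by s ([s i = true] means minus sign). *)
Definition signed_sum {R : ringType} (n : nat) (s : {ffun 'I_n -> bool})
  (a : 'I_n -> R) : R :=
  \sum_(i < n) (if s i then - a i else a i).

(* The sign vector with a single minus sign at index 0 (odd number of minus
   signs); used only as the seed of the max below, and it belongs to the
   range of the max, so it does not affect the value. *)
Definition sign0 (n : nat) : {ffun 'I_n.+1 -> bool} := [ffun i => i == ord0].

Definition s_odd {R : realDomainType} (n : nat) (a : 'I_n.+1 -> R) : R :=
  \big[Num.max/signed_sum (sign0 n) a]_(s : {ffun 'I_n.+1 -> bool}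
                                   | odd #|[set i | s i]|) signed_sum s a.

(** With the exclusion, each pair is determined by [p_i = Pr[V_i = 1]] and
    [p_(i+1) = Pr[W_(i+1) = 1]] (consistent connectedness), and
    [<V_i W_(i+1)> = 1 - 2 (p_i + p_(i+1))] with [p_i + p_(i+1) <= 1].
    Choosing all five signs negative gives the odd signed sum
    [4 (p_1 + ... + p_5) - 5], which is at most 3 iff [sum p_i <= 2]; every
    other odd choice of signs (one or three minus signs) gives at most 3 using
    only [p_i >= 0] and [p_i + p_(i+1) <= 1]. *)
From mathcomp Require Import all_boot all_order all_algebra.
From mathcomp Require Import reals lra.
Import Order.TTheory GRing.Theory Num.Theory.
Local Open Scope ring_scope.

Section PairDistribution.

Variables (R : realType) (Q : bool -> bool -> R).
Hypothesis Qdist : is_pair_dist Q.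

Lemma prV_ge0 x : 0 <= prV Q x.
Proof. by case: Qdist => Q_ge0 _; rewrite /prV big_bool addr_ge0. Qed.

Lemma corr_pair_dist :
  corr Q = 1 - 2 * (prV Q true + prW Q true) + 4 * Q true true.
Proof.
case: Qdist => _; rewrite /corr /prV /prW !big_bool /= /pm; lra.
Qed.

Lemma prV_prW_le : prV Q true + prW Q true <= 1 + Q true true.
Proof.
case: Qdist => Q_ge0; rewrite /prV /prW !big_bool /=.
have := Q_ge0 false false; lra.
Qed.

End PairDistribution.

Section OddSignedSums.

Variables (R : realDomainType) (n : nat) (a : 'I_n.+1 -> R).

Lemma odd_sign0 : odd #|[set i | sign0 n i]|.
Proof.
rewrite (_ : [set i | _] = [set ord0]) ?cards1 //.
by apply/setP=> i; rewrite !inE ffunE.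
Qed.

Lemma s_odd_le x :
  s_odd a <= x <->
  forall s : {ffun 'I_n.+1 -> bool}, odd #|[set i | s i]| -> signed_sum s a <= x.
Proof.
split=> [le_x s odd_s | le_x]; last exact: bigmax_le (le_x _ odd_sign0) le_x.
exact: le_trans (le_bigmax_cond _ _ odd_s) le_x.
Qed.

Lemma card_all_signs :
  #|[set i | ([ffun=> true] : {ffun 'I_n.+1 -> bool}) i]| = n.+1.
Proof.
rewrite (_ : [set i | _] = setT) ?cardsT ?card_ord //.
by apply/setP=> i; rewrite !inE ffunE.
Qed.

Lemma signed_sum_all_signs : signed_sum [ffun=> true] a = - \sum_i a i.
Proof. by rewrite /signed_sum -sumrN; apply: eq_bigr => i _; rewrite ffunE. Qed.

End OddSignedSums.

Lemma sum_ordS (V : nmodType) n (F : 'I_n -> V) :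
  \sum_(i < n) F (ordS i) = \sum_(i < n) F i.
Proof. by rewrite [RHS](reindex_inj (@ordS_inj n)). Qed.

Section Cycle5.

Variables (R : realFieldType) (p a : 'I_5 -> R).
Hypotheses (p_ge0 : forall i, 0 <= p i)
           (p_succ_le1 : forall i, p i + p (succ5 i) <= 1)
           (aE : forall i, a i = 1 - 2 * (p i + p (succ5 i))).

Lemma sum_cycle5 : \sum_i a i = 5 - 4 * \sum_i p i.
Proof.
rewrite (eq_bigr _ (fun i _ => aE i)) sumrB sumr_const card_ord -mulr_sumr.
by rewrite big_split /= sum_ordS; lra.
Qed.

Lemma signed_sum_cycle5_le3 (s : {ffun 'I_5 -> bool}) :
  \sum_i p i <= 2 -> odd #|[set i | s i]| -> signed_sum s a <= 3.
Proof.
(* Indexing through [nat] makes [succ5] of a concrete ordinal compute, so the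
   32 sign patterns become linear goals in five reals. *)
pose y k := p (inord k).
have pE (i : 'I_5) : p i = y i by rewrite /y inord_val.
have := p_ge0 (inord 0); have := p_ge0 (inord 1); have := p_ge0 (inord 2);
have := p_ge0 (inord 3); have := p_ge0 (inord 4).
have := p_succ_le1 (inord 0); have := p_succ_le1 (inord 1);
have := p_succ_le1 (inord 2); have := p_succ_le1 (inord 3);
have := p_succ_le1 (inord 4).
rewrite -sum1_card [in odd _]big_mkcond /signed_sum !big_ord_recl !big_ord0 /=.
rewrite !aE !pE /= !inordK // /bump /= !addn0 !add1n modnn !modn_small // !inE.
by move: (s _) (s _) (s _) (s _) (s _) => [] [] [] [] [] //=; lra.
Qed.

Lemma s_odd_cycle5_le3 : s_odd a <= 3 <-> \sum_i p i <= 2.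
Proof.
rewrite s_odd_le; split=> [all_le3 | sum_le2 s]; last exact: signed_sum_cycle5_le3.
have := all_le3 [ffun=> true].
by rewrite card_all_signs signed_sum_all_signs sum_cycle5 => /(_ isT); lra.
Qed.

End Cycle5.

Theorem theorem34 (R : realType) (P : 'I_5 -> bool -> bool -> R) :
  KCBS_system P ->
  consistently_connected P ->
  KCBS_exclusion P ->
  (s_odd (fun i : 'I_5 => corr (P i)) <= 3
   <-> \sum_(i < 5) prV (P i) true <= 2).
Proof.
move=> dist conn excl.
apply: (@s_odd_cycle5_le3 _ (fun i => prV (P i) true)) => i.
- exact: prV_ge0.
- by rewrite conn -[1]addr0 -(excl i) prV_prW_le.
- by rewrite corr_pair_dist // excl mulr0 addr0 conn.
Qed.
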